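(* Let $n\ge2$ and $d\ge1$ with $d^2\mid n-1$, and let $L_{n,d}$ be the rank two lattice with basis in which the Gram matrix is $\frac{2n-2}{d^2}\begin{pmatrix}1&0\\0&0\end{pmatrix}$. A vector $(x,y)\in L_{n,d}$ is primitive of self-intersection $2n-2$ if and only if $|x|=d$ and $\gcd(d,y)=1$. Two primitive vectors $(d,y)$ and $(d,z)$ belong to the same $O(L_{n,d})$-orbit if and only if $y\equiv z$ or $y\equiv -z$ modulo $d$. Consequently, for $d\ge 2$, the number of $O(L_{n,d})$-orbits of primitive vectors of $L_{n,d}$ of self-intersection $2n-2$ equals $\nu(d)$, where $\nu(2):=1$ and, for $d>2$, $\nu(d)$ is half the number of multiplicative units in $\mathbb{Z}/d\mathbb{Z}$. *)

From mathcomp Require Import all_boot all_order all_algebra.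
Set Implicit Arguments. Unset Strict Implicit. Unset Printing Implicit Defensive.
Import Order.TTheory GRing.Theory Num.Theory.
Local Open Scope ring_scope.

(* The lattice L_{n,d} is Z^2 (vectors = pairs of integers, coordinates in the
   given basis) with bilinear form b((x,y),(x',y')) = c * x * x',
   where c = (2n-2)/d^2 (an integer, since d^2 | n-1). *)
Definition gramc (n d : nat) : int := ((2 * n - 2) %/ (d ^ 2))%N%:Z.

Definition bil (c : int) (v w : int * int) : int := c * v.1 * w.1.

Definition act (g : 'M[int]_2) (v : int * int) : int * int :=
  (g ord0 ord0 * v.1 + g ord0 ord_max * v.2,
   g ord_max ord0 * v.1 + g ord_max ord_max * v.2).

Definition isometry (c : int) (g : 'M[int]_2) : Prop :=
  g \in unitmx /\ forall v w, bil c (act g v) (act g w) = bil c v w.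

Definition same_orbit (c : int) (v w : int * int) : Prop :=
  exists g, isometry c g /\ act g v = w.

Definition primitive (v : int * int) : Prop :=
  forall (k : int) (w : int * int), v = (k * w.1, k * w.2) -> `|k| = 1.

Definition nu (d : nat) : nat := if d == 2%N then 1%N else (totient d %/ 2)%N.

Definition num_classes (T : Type) (P : T -> Prop) (R : T -> T -> Prop) (k : nat) : Prop :=
  exists f : T -> nat,
    (forall v, P v -> (f v < k)%N) /\
    (forall i, (i < k)%N -> exists v, P v /\ f v = i) /\
    (forall v w, P v -> P w -> (R v w <-> f v = f w)).

(* The form only sees the first coordinate, so an isometry of L_{n,d} is a
   lower triangular matrix [[e, 0], [a, e']] with e, e' = 1 or -1, acting by
   (x, y) |-> (e x, a x + e' y).  Hence the vectors of square 2n-2 are those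
   with x = d or x = -d, primitivity amounts to gcd(d, y) = 1, and the orbit
   of (x, y) is determined by the class of y up to sign modulo d.  Choosing the
   representative 0 <= k <= d/2 of that class, the orbits correspond to the
   k <= d/2 coprime to d, and the involution k |-> d - k of the units of Z/dZ
   shows that there are phi(d)/2 of them when d > 2. *)

From Pilot Require Import Defs.
From mathcomp Require Import all_boot all_order all_algebra ring zify.
Set Implicit Arguments. Unset Strict Implicit. Unset Printing Implicit Defensive.
Import Order.TTheory GRing.Theory Num.Theory.
Local Open Scope ring_scope.

Lemma primitiveE x y : primitive (x, y) <-> gcdz x y = 1.
Proof.
split=> [prim_xy | gcd1 k [w1 w2] [x_eq y_eq]].
- have x_eq : x = gcdz x y * (x %/ gcdz x y)%Z by rewrite mulrC divzK ?dvdz_gcdl.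
  have y_eq : y = gcdz x y * (y %/ gcdz x y)%Z by rewrite mulrC divzK ?dvdz_gcdr.
  have gcd_ge0 : 0 <= gcdz x y by [].
  by have := prim_xy _ (_, _) (f_equal2 pair x_eq y_eq); lia.
- move: gcd1; rewrite x_eq y_eq -mulz_gcdr /gcdz -PoszM => /eqP.
  by rewrite eqz_nat muln_eq1 => /andP[/eqP k1 _]; lia.
Qed.

Lemma det_mx2_lower (R : comPzRingType) (g : 'M[R]_2) :
  g ord0 ord_max = 0 -> \det g = g ord0 ord0 * g ord_max ord_max.
Proof.
move=> g01; rewrite det_trig.
  by rewrite big_ord_recl big_ord1; congr (_ * g _ _); apply: val_inj.
apply/is_trig_mxP => -[[|[|//]] ?] [[|[|//]] ?] //= _.
by rewrite -g01; congr (g _ _); apply: val_inj.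
Qed.

Lemma isometryP (c : int) (g : 'M[int]_2) : c != 0 ->
  Defs.isometry c g <-> [/\ g ord0 ord_max = 0,
                     g ord0 ord0 = 1 \/ g ord0 ord0 = -1 &
                     g ord_max ord_max = 1 \/ g ord_max ord_max = -1].
Proof.
move=> c_neq0; split=> [[g_unit g_bil] | [g01 g00_sign g11_sign]].
- have g01 : g ord0 ord_max = 0.
    have := g_bil (0, 1) (0, 1); rewrite /bil /act /= !mulr0 !mulr1 !add0r.
    by move/eqP; rewrite -mulrA mulf_eq0 (negbTE c_neq0) mulf_eq0 orbb => /eqP.
  have g00_sign : g ord0 ord0 = 1 \/ g ord0 ord0 = -1.
    have := g_bil (1, 0) (1, 0); rewrite /bil /act /= !mulr0 !mulr1 !addr0.
    rewrite -mulrA -{2}[c]mulr1 => /(mulfI c_neq0)/eqP.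
    by rewrite -expr2 sqrf_eq1 => /orP[]/eqP; tauto.
  split=> //; move: g_unit; rewrite unitmxE det_mx2_lower // qualifE /=.
  by case: g00_sign => -> /orP[]/eqP; lia.
- split.
  + rewrite unitmxE det_mx2_lower // qualifE /=.
    by case: g00_sign => ->; case: g11_sign => ->.
  + move=> [v1 v2] [w1 w2]; rewrite /bil /act /= g01 !mul0r !addr0.
    by case: g00_sign => ->; ring.
Qed.

Lemma same_orbitP (c x y x' y' : int) : c != 0 ->
  same_orbit c (x, y) (x', y') <->
  (x' = x \/ x' = - x) /\
  exists a e : int, (e = 1 \/ e = -1) /\ y' = a * x + e * y.
Proof.
move=> c_neq0; split=> [[g [/(isometryP _ c_neq0)[g01 g00_sign g11_sign]]] | ].
  rewrite /act /= g01 mul0r addr0 => -[<- <-].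
  split; first by case: g00_sign => ->; lia.
  by exists (g ord_max ord0), (g ord_max ord_max).
move=> [x'_sign [a [e [e_sign ->]]]].
have [s [s_sign ->]] : exists s : int, (s = 1 \/ s = -1) /\ x' = s * x.
  by case: x'_sign => ->; [exists 1 | exists (-1)]; split; lia.
pose g : 'M[int]_2 := \matrix_(i, j)
  if i == ord0 then (if j == ord0 then s else 0) else (if j == ord0 then a else e).
exists g; split; last by rewrite /act !mxE /= mul0r addr0.
by apply/(isometryP _ c_neq0); rewrite !mxE.
Qed.

Definition eqmodpm (d : nat) (a b : int) : Prop :=
  exists q e : int, (e = 1 \/ e = -1) /\ a - e * b = q * d%:Z.

Lemma eqmodpmE d a b :
  eqmodpm d a b <-> (a == b %[mod d%:Z])%Z \/ (a == - b %[mod d%:Z])%Z.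
Proof.
rewrite !eqz_mod_dvd; split.
- move=> [q [e [[]-> ab_eq]]]; [left | right]; apply/dvdzP; exists q; lia.
- move=> [/dvdzP[q ab_eq] | /dvdzP[q ab_eq]]; exists q;
    [exists 1 | exists (-1)]; split; lia.
Qed.

Lemma eqmodpm_sym d a b : eqmodpm d a b -> eqmodpm d b a.
Proof.
move=> [q [e [[]-> ab_eq]]]; [exists (- q), 1 | exists q, (-1)]; split; lia.
Qed.

Lemma eqmodpm_trans d a b c : eqmodpm d a b -> eqmodpm d b c -> eqmodpm d a c.
Proof.
move=> [q1 [e1 [e1_sign ab_eq]]] [q2 [e2 [e2_sign bc_eq]]].
exists (q1 + e1 * q2), (e1 * e2).
by move: e1_sign e2_sign ab_eq bc_eq => [] -> [] -> ab_eq bc_eq; split; lia.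
Qed.

(* The distance from t to dZ: a canonical representative of the class of
   t up to sign modulo d. *)
Definition modabs (d : nat) (t : int) : nat :=
  let r := `|(t %% d%:Z)%Z|%N in minn r (d - r).

Lemma modabs_le_half d t : (2 * modabs d t <= d)%N.
Proof. rewrite /modabs; lia. Qed.

Lemma eqmodpm_modabs d t : (0 < d)%N -> eqmodpm d (modabs d t)%:Z t.
Proof.
move=> d_gt0; rewrite /modabs.
have t_eq := divz_eq t d%:Z.
have r_ge0 : 0 <= (t %% d%:Z)%Z by apply: modz_ge0; lia.
have r_lt : (t %% d%:Z)%Z < d%:Z by apply: ltz_pmod; lia.
move: (t %% d%:Z)%Z (t %/ d%:Z)%Z t_eq r_ge0 r_lt => r q t_eq r_ge0 r_lt.
case: leqP => _; [exists (- q), 1 | exists (1 + q), (-1)]; split; lia.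
Qed.

Lemma eqmodpm_half_inj d m1 m2 : (2 * m1 <= d)%N -> (2 * m2 <= d)%N ->
  eqmodpm d m1%:Z m2%:Z -> m1 = m2.
Proof.
move=> m1_le m2_le [q [e [[]-> m_eq]]].
- have [q0|[q_ge1|q_lt0]] : q = 0 \/ 1 <= q \/ q < 0 by lia.
  + subst; lia.
  + nia.
  + nia.
- have [q0|[q1|[q_ge2|q_lt0]]] : q = 0 \/ q = 1 \/ 2 <= q \/ q < 0 by lia.
  + subst; lia.
  + subst; lia.
  + nia.
  + nia.
Qed.

Lemma modabs_eq d a b : (0 < d)%N -> modabs d a = modabs d b <-> eqmodpm d a b.
Proof.
move=> d_gt0; split => [rep_eq | ab].
- apply: eqmodpm_trans (eqmodpm_sym (eqmodpm_modabs a d_gt0)) _.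
  by rewrite rep_eq; apply: eqmodpm_modabs.
- apply: eqmodpm_half_inj (modabs_le_half d a) (modabs_le_half d b) _.
  apply: eqmodpm_trans (eqmodpm_modabs a d_gt0) _.
  apply: eqmodpm_trans ab (eqmodpm_sym (eqmodpm_modabs b d_gt0)).
Qed.

Lemma modabs_id d k : (0 < d)%N -> (2 * k <= d)%N -> modabs d k%:Z = k.
Proof.
move=> d_gt0 k_le; apply: eqmodpm_half_inj (modabs_le_half d k) k_le _.
exact: eqmodpm_modabs.
Qed.

Definition half_units (d : nat) : seq nat :=
  [seq k <- iota 0 d | coprime k d && (2 * k <= d)%N].

Lemma coprime_subn k d : (k <= d)%N -> coprime (d - k) d = coprime k d.
Proof.
move=> /subnKC {2 3}<-; rewrite /coprime.
by rewrite gcdnDr gcdnDl gcdnC.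
Qed.

Lemma size_half_units d : (2 <= d)%N -> size (half_units d) = nu d.
Proof.
rewrite /nu; case: eqP => [-> //|d_neq2 d_ge2].
pose F k := coprime k d && (2 * k <= d)%N.
have F_reflect k : (0 < k < d)%N -> (F k + F (d - k))%N = coprime k d.
  move=> /andP[k_gt0 k_lt_d]; rewrite /F coprime_subn ?(ltnW k_lt_d) //.
  case cop_kd: (coprime k d) => //=.
  have k2_neq_d : (2 * k != d)%N.
    apply: contraTneq cop_kd => k2_eq; rewrite -k2_eq /coprime gcdnMl; lia.
  case: leqP; case: leqP => /=; lia.
have sizeE : size (half_units d) = (\sum_(1 <= k < d) F k)%N.
  rewrite size_filter -sum1_count big_mkcond /= -{1}(subn0 d) -/(index_iota 0 d).
  rewrite big_ltn; last lia.
  by rewrite /F /coprime gcd0n; case: eqP => [|_]; [lia|].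
suff : (2 * size (half_units d) = totient d)%N by lia.
rewrite totient_count_coprime big_ltn; last lia.
rewrite /coprime gcdn0 (_ : (d == 1%N) = false) ?add0n; last lia.
rewrite sizeE mul2n -addnn {2}big_nat_rev /= -big_split /= big_nat_cond.
rewrite [in RHS]big_nat_cond; apply: eq_bigr => k /andP[k_range _].
by rewrite add1n subSS F_reflect // /coprime gcdnC.
Qed.

Lemma modabs_in_half_units d y :
  (0 < d)%N -> gcdz d%:Z y = 1 -> modabs d y \in half_units d.
Proof.
move=> d_gt0 gcd1; rewrite mem_filter mem_iota modabs_le_half /= andbT add0n.
have rep_lt : (modabs d y < d)%N by have := modabs_le_half d y; lia.
have [q [e [e_sign rep_eq]]] := eqmodpm_modabs y d_gt0.
have : gcdz d%:Z (modabs d y)%:Z = 1.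
  rewrite (_ : (modabs d y)%:Z = q * d%:Z + e * y); last lia.
  by rewrite gcdzMDl; case: e_sign => ->; rewrite ?mul1r ?mulN1r ?gcdzN.
by rewrite rep_lt andbT /coprime gcdnC /gcdz !absz_nat => -[->].
Qed.

Lemma gramc_mul_sqr n d : (d ^ 2 %| n - 1)%N ->
  gramc n d * (d%:Z * d%:Z) = (2 * n - 2)%N%:Z.
Proof.
move=> sqr_dvd; have : (d ^ 2 %| 2 * n - 2)%N.
  by rewrite (_ : 2 * n - 2 = 2 * (n - 1))%N ?dvdn_mull //; lia.
by rewrite /gramc => /divnK; move: (_ %/ _)%N => k; lia.
Qed.

Section Shell.

Variables n d : nat.
Hypotheses (n_ge2 : (2 <= n)%N) (sqr_dvd : (d ^ 2 %| n - 1)%N).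

Let c := gramc n d.

Lemma gramc_neq0 : c != 0.
Proof.
apply/eqP => c_eq0; have := gramc_mul_sqr sqr_dvd.
rewrite -/c c_eq0 mul0r; lia.
Qed.

Lemma bil_shellE x y : bil c (x, y) (x, y) = (2 * n - 2)%N%:Z <-> `|x| = d%:Z.
Proof.
rewrite /bil /= -(gramc_mul_sqr sqr_dvd) -/c -!mulrA.
split=> [/(mulfI gramc_neq0) | x_abs]; first nia.
have [->|->] : x = d%:Z \/ x = - d%:Z by lia.
all: by rewrite ?mulrNN.
Qed.

Lemma shellP x y :
  primitive (x, y) /\ bil c (x, y) (x, y) = (2 * n - 2)%N%:Z <->
  `|x| = d%:Z /\ gcdz d%:Z y = 1.
Proof.
rewrite primitiveE bil_shellE /gcdz.
split=> -[gcd1 x_abs]; have x_absz : `|x|%N = d by lia.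
- by rewrite absz_nat -x_absz.
- by rewrite x_absz -(absz_nat d).
Qed.

Lemma shell_same_orbit x y x' y' : `|x| = d%:Z -> `|x'| = d%:Z ->
  same_orbit c (x, y) (x', y') <-> eqmodpm d y' y.
Proof.
move=> x_abs x'_abs; rewrite (same_orbitP _ _ _ _ gramc_neq0).
have [s s_sign x_eq] : exists2 s : int, s = 1 \/ s = -1 & x = s * d%:Z.
  have [->|->] : x = d%:Z \/ x = - d%:Z by lia.
  - by exists 1; [left | rewrite mul1r].
  - by exists (-1); [right | rewrite mulN1r].
split=> [[_ [a [e [e_sign ->]]]] | [q [e [e_sign yy'_eq]]]].
- by exists (a * s), e; split; last by case: s_sign x_eq => -> ->; lia.
- split; first lia.
  by exists (q * s), e; split; last by case: s_sign x_eq => -> ->; lia.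
Qed.

Lemma shell_num_classes : (2 <= d)%N ->
  num_classes (fun v => primitive v /\ bil c v v = (2 * n - 2)%N%:Z)
    (same_orbit c) (nu d).
Proof.
move=> d_ge2; have d_gt0 : (0 < d)%N by lia.
rewrite -size_half_units //.
exists (fun v => index (modabs d v.2) (half_units d)); split; [|split].
- by move=> [x y] /shellP[_ gcd1]; rewrite index_mem modabs_in_half_units.
- move=> i i_lt; set k := nth 0%N (half_units d) i.
  have : k \in half_units d by apply: mem_nth.
  rewrite mem_filter mem_iota => /andP[/andP[cop_kd k_le] _].
  exists (d%:Z, k%:Z); split.
  + by apply/shellP; rewrite /gcdz !absz_nat gcdnC (eqP cop_kd).
  + by rewrite /= modabs_id // index_uniq // filter_uniq // iota_uniq.
- move=> [x y] [x' y'] /shellP[x_abs gcd1] /shellP[x'_abs gcd1'].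
  rewrite shell_same_orbit // -modabs_eq //=.
  split=> [-> // | index_eq]; apply: esym.
  by apply: (index_inj 0%N) index_eq; exact: modabs_in_half_units.
Qed.

End Shell.

Theorem lemma2p6 (n d : nat) (hn : (2 <= n)%N) (hd : (1 <= d)%N)
  (hdiv : (d ^ 2 %| n - 1)%N) :
  let c := gramc n d in
  (forall x y : int,
     (primitive (x, y) /\ bil c (x, y) (x, y) = (2 * n - 2)%N%:Z)
     <-> (`|x| = d%:Z /\ gcdz d%:Z y = 1)) /\
  (forall y z : int,
     primitive (d%:Z, y) -> bil c (d%:Z, y) (d%:Z, y) = (2 * n - 2)%N%:Z ->
     primitive (d%:Z, z) -> bil c (d%:Z, z) (d%:Z, z) = (2 * n - 2)%N%:Z ->
     (same_orbit c (d%:Z, y) (d%:Z, z) <->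
      ((y == z %[mod d%:Z])%Z \/ (y == - z %[mod d%:Z])%Z))) /\
  ((2 <= d)%N ->
     num_classes
       (fun v => primitive v /\ bil c v v = (2 * n - 2)%N%:Z)
       (same_orbit c) (nu d)).
Proof.
move=> c; split; first exact: shellP.
split; last exact: shell_num_classes.
move=> y z _ _ _ _; rewrite shell_same_orbit ?normr_nat // -eqmodpmE.
by split; apply: eqmodpm_sym.
Qed.
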